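(* There are no rotational $W$-translators in $\mathrm{SL}(2,\mathbb R)$ with constant mean curvature, where $W=\frac12(x^2-y^2)\partial_x+xy\partial_y$.
   Context: $\mathrm{SL}(2,\mathbb R)$ is given global coordinates $(x,y,\theta)\in\mathbb R\times(0,\infty)\times\mathbb R$ via $(x,y,\theta)\mapsto \begin{pmatrix}1&x\\0&1\end{pmatrix}\begin{pmatrix}\sqrt y&0\\0&1/\sqrt y\end{pmatrix}\begin{pmatrix}\cos\theta&\sin\theta\\-\sin\theta&\cos\theta\end{pmatrix}$, with the metric $\langle\,,\rangle=\frac{dx^2+dy^2}{4y^2}+\left(d\theta+\frac{dx}{2y}\right)^2$. Orthonormal frame: $e_1=2y\partial_x-\partial_\theta$, $e_2=2y\partial_y$, $e_3=\partial_\theta$; $W=\frac{1}{2y}\big(\frac12(x^2-y^2)e_1+xye_2+\frac12(x^2-y^2)e_3\big)$. A surface with unit normal $N$ and mean curvature $H$ (average of principal curvatures w.r.t. $N$) is a $W$-translator if $H=\langle N,W\rangle$. Rotational surfaces are those parametrized as $(s,t)\mapsto(x(s),y(s),t)$ with generating curve $(x(s),y(s))$; when $x'=2y\cos\varphi$, $y'=2y\sin\varphi$ (arclength parametrization in the hyperbolic plane $\frac{dx^2+dy^2}{4y^2}$), $N=-\sin\varphi\,e_1+\cos\varphi\,e_2$ and $H=\frac{\varphi'}{2}+\cos\varphi$. *)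

From Stdlib Require Import Reals.
Open Scope R_scope.

(* Components of vectors in the orthonormal frame (e1,e2,e3) of SL(2,R),
   e1 = 2y d_x - d_theta, e2 = 2y d_y, e3 = d_theta. *)
Record frame_vec := FV { c1 : R; c2 : R; c3 : R }.

(* Since the frame is orthonormal, the metric is the Euclidean product
   of frame components. *)
Definition inner (u v : frame_vec) : R := c1 u * c1 v + c2 u * c2 v + c3 u * c3 v.

Definition W_field (x y : R) : frame_vec :=
  FV (/(2*y) * (/2 * (x^2 - y^2))) (/(2*y) * (x*y)) (/(2*y) * (/2 * (x^2 - y^2))).

Definition N_rot (phi : R) : frame_vec := FV (- sin phi) (cos phi) 0.

Definition H_rot (phi dphi : R) : R := dphi / 2 + cos phi.

(* A rotational surface (s,t) |-> (x s, y s, t), s in the open interval (a,b),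
   with generating curve parametrized by hyperbolic arclength with angle phi
   (x' = 2y cos phi, y' = 2y sin phi, dphi = phi'), which is a W-translator:
   H = <N, W>. *)
Definition rotational_W_translator (a b : R) (x y phi dphi : R -> R) : Prop :=
  a < b /\
  forall s, a < s < b ->
    0 < y s /\
    derivable_pt_lim x s (2 * y s * cos (phi s)) /\
    derivable_pt_lim y s (2 * y s * sin (phi s)) /\
    derivable_pt_lim phi s (dphi s) /\
    H_rot (phi s) (dphi s) = inner (N_rot (phi s)) (W_field (x s) (y s)).

(* Write z = x + i y for the generating curve and u = e^(-i phi) z^2.  Since
   z' = 2 y e^(i phi) along a hyperbolic arclength parametrization,
   u' = -i phi' u + 4 y z, and the translator equation reads
   H = Im u / (4 y).  For H = c constant, phi' = 2 (c - cos phi); differentiating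
   Im u = 4 c y gives c Re u = |z|^2, and differentiating this once more gives a
   third relation.  Together with |u| = |z|^2 these force Re u = c |z|^2, hence
   c^2 = 1 and Im u = 0, contradicting Im u = 4 c y with y > 0. *)

From Stdlib Require Import Reals Lra Psatz.
From Coquelicot Require Import Coquelicot.
Open Scope R_scope.

Lemma is_derive_vanishing_on_interval (f : R -> R) (a b s l : R) :
  (forall t, a < t < b -> f t = 0) -> a < s < b -> is_derive f s l -> l = 0.
Proof.
  intros f0 Hs Hf.
  assert (near_s : locally s (fun t => f t = 0)).
  { apply (filter_imp (fun t => a < t < b)); [exact f0|].
    exact (open_and _ _ (open_gt a) (open_lt b) s Hs). }
  apply (is_derive_ext_loc _ (fun _ => 0)) in Hf; [|exact near_s].
  rewrite <- (is_derive_unique _ _ _ Hf). apply Derive_const.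
Qed.

Lemma sin_cos_sq (t : R) : sin t ^ 2 + cos t ^ 2 = 1.
Proof. rewrite <- (sin2_cos2 t). unfold Rsqr. ring. Qed.

Lemma inner_N_rot_W_field (phi x y : R) : y <> 0 ->
  inner (N_rot phi) (W_field x y) =
  (cos phi * (2 * x * y) - sin phi * (x ^ 2 - y ^ 2)) / (4 * y).
Proof. intros y0. unfold inner, N_rot, W_field; simpl. field. exact y0. Qed.

(* Real and imaginary parts of e^(-i phi) (x + i y)^2. *)
Definition twisted_sq_re (x y phi : R -> R) (s : R) : R :=
  cos (phi s) * (x s ^ 2 - y s ^ 2) + sin (phi s) * (2 * x s * y s).

Definition twisted_sq_im (x y phi : R -> R) (s : R) : R :=
  cos (phi s) * (2 * x s * y s) - sin (phi s) * (x s ^ 2 - y s ^ 2).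

Lemma twisted_sq_rotate_back (x y phi : R -> R) (s : R) :
  cos (phi s) * twisted_sq_re x y phi s - sin (phi s) * twisted_sq_im x y phi s
  = x s ^ 2 - y s ^ 2.
Proof.
  unfold twisted_sq_re, twisted_sq_im.
  replace (x s ^ 2 - y s ^ 2) with
    ((x s ^ 2 - y s ^ 2) * (sin (phi s) ^ 2 + cos (phi s) ^ 2)) at 3
    by (rewrite sin_cos_sq; ring).
  ring.
Qed.

Ltac derive_from_hyps :=
  auto_derive;
  [ repeat split; eexists; eassumption
  | repeat (erewrite is_derive_unique by eassumption) ].

Section ArclengthCurve.

Variables (x y phi : R -> R) (s dphi : R).
Hypothesis x_deriv : is_derive x s (2 * y s * cos (phi s)).
Hypothesis y_deriv : is_derive y s (2 * y s * sin (phi s)).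
Hypothesis phi_deriv : is_derive phi s dphi.

Lemma is_derive_twisted_sq_re :
  is_derive (twisted_sq_re x y phi) s
    (dphi * twisted_sq_im x y phi s + 4 * x s * y s).
Proof.
  unfold twisted_sq_re, twisted_sq_im. derive_from_hyps.
  replace (4 * x s * y s) with ((4 * x s * y s) * (sin (phi s) ^ 2 + cos (phi s) ^ 2))
    by (rewrite sin_cos_sq; ring).
  ring.
Qed.

Lemma is_derive_twisted_sq_im :
  is_derive (twisted_sq_im x y phi) s
    (- dphi * twisted_sq_re x y phi s + 4 * y s ^ 2).
Proof.
  unfold twisted_sq_re, twisted_sq_im. derive_from_hyps.
  replace (4 * y s ^ 2) with ((4 * y s ^ 2) * (sin (phi s) ^ 2 + cos (phi s) ^ 2))
    by (rewrite sin_cos_sq; ring).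
  ring.
Qed.

End ArclengthCurve.

Lemma twisted_sq_system_inconsistent (x y S C c : R) :
  S ^ 2 + C ^ 2 = 1 -> 0 < y ->
  C * (2 * x * y) - S * (x ^ 2 - y ^ 2) = 4 * c * y ->
  c * (C * (x ^ 2 - y ^ 2) + S * (2 * x * y)) = x ^ 2 + y ^ 2 ->
  2 * c ^ 2 * (c - C) + c * x = x * C + y * S -> False.
Proof.
  set (U := C * (x ^ 2 - y ^ 2) + S * (2 * x * y)).
  set (V := C * (2 * x * y) - S * (x ^ 2 - y ^ 2)).
  set (r := x ^ 2 + y ^ 2).
  intros trig y_pos im_eq re_eq third.
  assert (r_pos : 0 < r) by (unfold r; nra).
  assert (c_neq0 : c <> 0) by (intros ->; lra).
  (* r times the third relation, modulo the first two and S^2 + C^2 = 1 *)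
  assert (reduction : r * (2 * c ^ 2 * (c - C) + c * x - (x * C + y * S)) =
    2 * c ^ 2 * (c * r - U) + c * (S * x - C * y) * (4 * c * y - V)
    + (r - c * U) * (c * x - x * C - y * S) - c * x * (r - c * U)
    + c * x * r * (1 - (S ^ 2 + C ^ 2))) by (unfold U, V, r; ring).
  replace (2 * c ^ 2 * (c - C) + c * x - (x * C + y * S)) with 0 in reduction by lra.
  replace (4 * c * y - V) with 0 in reduction by lra.
  replace (r - c * U) with 0 in reduction by lra.
  replace (1 - (S ^ 2 + C ^ 2)) with 0 in reduction by lra.
  assert (U_eq : U = c * r).
  { apply (Rmult_eq_reg_l (c ^ 2)); [lra | now apply pow_nonzero]. }
  assert (c_sq : c ^ 2 = 1) by (apply (Rmult_eq_reg_r r); nra).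
  assert (modulus : U ^ 2 + V ^ 2 = r ^ 2 * (S ^ 2 + C ^ 2)) by (unfold U, V, r; ring).
  rewrite trig, U_eq in modulus.
  nra.
Qed.

Section ConstantCurvatureTranslator.

Variables (a b c : R) (x y phi : R -> R).
Hypothesis y_pos : forall s, a < s < b -> 0 < y s.
Hypothesis x_deriv : forall s, a < s < b -> is_derive x s (2 * y s * cos (phi s)).
Hypothesis y_deriv : forall s, a < s < b -> is_derive y s (2 * y s * sin (phi s)).
Hypothesis phi_deriv : forall s, a < s < b -> is_derive phi s (2 * (c - cos (phi s))).
Hypothesis translator : forall s, a < s < b -> twisted_sq_im x y phi s = 4 * c * y s.

Lemma cmc_translator_re s : a < s < b ->
  c * twisted_sq_re x y phi s = x s ^ 2 + y s ^ 2.
Proof.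
  intros Hs.
  assert (D : is_derive (fun t => twisted_sq_im x y phi t - 4 * c * y t) s
     (- 2 * (c - cos (phi s)) * twisted_sq_re x y phi s + 4 * y s ^ 2
      - 2 * sin (phi s) * (4 * c * y s))).
  { pose proof (is_derive_twisted_sq_im x y phi s _
      (x_deriv s Hs) (y_deriv s Hs) (phi_deriv s Hs)).
    pose proof (y_deriv s Hs).
    derive_from_hyps. ring. }
  apply (is_derive_vanishing_on_interval _ a b s) in D;
    [| intros t Ht; rewrite translator; [ring | exact Ht] | exact Hs].
  rewrite <- (translator s Hs) in D.
  pose proof (twisted_sq_rotate_back x y phi s).
  lra.
Qed.

Lemma cmc_translator_re_deriv s : a < s < b ->
  2 * c ^ 2 * (c - cos (phi s)) + c * x s = x s * cos (phi s) + y s * sin (phi s).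
Proof.
  intros Hs.
  assert (D : is_derive (fun t => c * twisted_sq_re x y phi t - (x t ^ 2 + y t ^ 2)) s
     (c * (2 * (c - cos (phi s)) * twisted_sq_im x y phi s + 4 * x s * y s)
      - 4 * y s * (x s * cos (phi s) + y s * sin (phi s)))).
  { pose proof (is_derive_twisted_sq_re x y phi s _
      (x_deriv s Hs) (y_deriv s Hs) (phi_deriv s Hs)).
    pose proof (x_deriv s Hs); pose proof (y_deriv s Hs).
    derive_from_hyps. ring. }
  apply (is_derive_vanishing_on_interval _ a b s) in D;
    [| intros t Ht; rewrite cmc_translator_re; [ring | exact Ht] | exact Hs].
  rewrite (translator s Hs) in D.
  pose proof (y_pos s Hs).
  apply (Rmult_eq_reg_l (4 * y s)); lra.
Qed.

Lemma cmc_translator_interval_empty s : ~ a < s < b.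
Proof.
  intros Hs.
  apply (twisted_sq_system_inconsistent (x s) (y s) (sin (phi s)) (cos (phi s)) c).
  - apply sin_cos_sq.
  - exact (y_pos s Hs).
  - exact (translator s Hs).
  - exact (cmc_translator_re s Hs).
  - exact (cmc_translator_re_deriv s Hs).
Qed.

End ConstantCurvatureTranslator.

Theorem mainTheorem6 :
  ~ (exists (a b : R) (x y phi dphi : R -> R) (c : R),
       rotational_W_translator a b x y phi dphi /\
       (forall s, a < s < b -> H_rot (phi s) (dphi s) = c)).
Proof.
  intros (a & b & x & y & phi & dphi & c & [Hab curve] & cmc).
  apply (cmc_translator_interval_empty a b c x y phi) with ((a + b) / 2);
    [intros s Hs; destruct (curve s Hs) as (Hy & Hx' & Hy' & Hphi' & Htr) .. | lra].
  - exact Hy.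
  - now apply is_derive_Reals.
  - now apply is_derive_Reals.
  - apply is_derive_Reals.
    replace (2 * (c - cos (phi s))) with (dphi s); [exact Hphi'|].
    specialize (cmc s Hs). unfold H_rot in cmc. lra.
  - rewrite <- (cmc s Hs), Htr, inner_N_rot_W_field by lra.
    unfold twisted_sq_im. field. lra.
Qed.
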